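(* Let $P$ be a directed complete poset. Then the map $\xi^\sigma_{\Sigma P}:\Sigma P\to \Sigma\,\mathsf{K}(\Sigma P)$, $x\mapsto\uparrow x$, is continuous.
   Context: A dcpo is a poset in which every directed subset has a supremum. For a poset $Q$, the Scott topology $\sigma(Q)$ consists of upper sets $U$ such that every directed $D$ whose supremum exists and lies in $U$ meets $U$; $\Sigma Q=(Q,\sigma(Q))$. For a $T_0$ space $Y$ (here $Y=\Sigma P$, whose specialization order is the order of $P$), $\mathsf{K}(Y)$ is the set of nonempty compact saturated (= upper in the specialization order) subsets, ordered by reverse inclusion; a family in $\mathsf{K}(Y)$ has a supremum iff its intersection lies in $\mathsf{K}(Y)$, and then the supremum is the intersection. $\Sigma\,\mathsf{K}(Y)$ is $\mathsf{K}(Y)$ with its Scott topology. *)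

From Stdlib Require Import List.

Record poset := Poset {
  carrier :> Type;
  le : carrier -> carrier -> Prop;
  le_refl : forall x, le x x;
  le_antisym : forall x y, le x y -> le y x -> x = y;
  le_trans : forall x y z, le x y -> le y z -> le x z
}.

Definition set (T : Type) := T -> Prop.

Definition directed {T : Type} (r : T -> T -> Prop) (D : set T) : Prop :=
  (exists d, D d) /\
  (forall x y, D x -> D y -> exists z, D z /\ r x z /\ r y z).

Definition is_sup {T : Type} (r : T -> T -> Prop) (D : set T) (s : T) : Prop :=
  (forall d, D d -> r d s) /\ (forall u, (forall d, D d -> r d u) -> r s u).

Definition is_upper {T : Type} (r : T -> T -> Prop) (U : set T) : Prop :=
  forall x y, U x -> r x y -> U y.

Definition scott_open {T : Type} (r : T -> T -> Prop) (U : set T) : Prop :=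
  is_upper r U /\
  (forall D s, directed r D -> is_sup r D s -> U s -> exists d, D d /\ U d).

Definition dcpo (P : poset) : Prop :=
  forall D : set P, directed (@le P) D -> exists s, is_sup (@le P) D s.

Definition compact {T : Type} (isopen : set T -> Prop) (A : set T) : Prop :=
  forall F : set (set T),
    (forall U, F U -> isopen U) ->
    (forall x, A x -> exists U, F U /\ U x) ->
    exists l : list (set T),
      (forall U, In U l -> F U) /\ (forall x, A x -> exists U, In U l /\ U x).

(* K(Sigma P): nonempty compact saturated subsets of Sigma P; saturated =
   upper in the specialization order of Sigma P, which is the order of P. *)
Definition in_K (P : poset) (A : set P) : Prop :=
  (exists x, A x) /\ compact (scott_open (@le P)) A /\ is_upper (@le P) A.

Definition KS (P : poset) : Type := { A : set P | in_K P A }.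

Definition leK (P : poset) (A B : KS P) : Prop :=
  forall x, proj1_sig B x -> proj1_sig A x.

Definition upset (P : poset) (x : P) : set P := fun y => @le P x y.

Lemma upset_in_K (P : poset) (x : P) : in_K P (upset P x).
Proof.
  split; [| split].
  - exists x; apply le_refl.
  - intros F HF Hc.
    destruct (Hc x (le_refl P x)) as [U [HU Ux]].
    exists (U :: nil); split.
    + intros V [<- | []]; exact HU.
    + intros y Hy; exists U; split; [left; reflexivity|].
      destruct (HF U HU) as [Hup _]; exact (Hup x y Ux Hy).
  - intros y z Hy Hz; exact (le_trans P x y z Hy Hz).
Qed.

Definition xi (P : poset) (x : P) : KS P := exist _ (upset P x) (upset_in_K P x).

Definition scott_continuous_map {S T : Type} (rS : S -> S -> Prop)
    (rT : T -> T -> Prop) (f : S -> T) : Prop :=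
  forall V : set T, scott_open rT V -> scott_open rS (fun x => V (f x)).


(* A monotone map preserving all existing suprema of directed sets is Scott
   continuous. The map x |-> up x is such a map: it is monotone for reverse
   inclusion, and if s is the supremum of a directed D then up s is the
   intersection of the up d, d in D, which is the supremum in K. No
   completeness of P is needed for this. *)

Definition image {S T : Type} (f : S -> T) (D : set S) : set T :=
  fun y => exists d, D d /\ y = f d.

Section ScottContinuity.

Variables (S T : Type) (rS : S -> S -> Prop) (rT : T -> T -> Prop) (f : S -> T).
Hypothesis f_mono : forall x y, rS x y -> rT (f x) (f y).

Lemma directed_image (D : set S) : directed rS D -> directed rT (image f D).
Proof.
  intros [[d0 Dd0] Hdir]; split.
  - exists (f d0), d0; auto.
  - intros _ _ [a [Da ->]] [b [Db ->]].
    destruct (Hdir a b Da Db) as [c [Dc [Hac Hbc]]].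
    exists (f c); repeat split; auto.
    exists c; auto.
Qed.

Hypothesis f_sup : forall D s, directed rS D -> is_sup rS D s ->
  is_sup rT (image f D) (f s).

Lemma scott_continuous_of_monotone_sup : scott_continuous_map rS rT f.
Proof.
  intros V [Vup Vsup]; split.
  - intros x y Vx Hxy; exact (Vup (f x) (f y) Vx (f_mono x y Hxy)).
  - intros D s HD Hs Vs.
    destruct (Vsup (image f D) (f s) (directed_image D HD) (f_sup D s HD Hs) Vs)
      as [_ [[d [Dd ->]] Vfd]].
    exists d; auto.
Qed.

End ScottContinuity.

Lemma xi_mono (P : poset) (x y : P) : le P x y -> leK P (xi P x) (xi P y).
Proof.
  intros Hxy z Hyz; exact (le_trans P _ _ _ Hxy Hyz).
Qed.

Lemma xi_sup (P : poset) (D : set P) (s : P) :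
  is_sup (@le P) D s -> is_sup (leK P) (image (xi P) D) (xi P s).
Proof.
  intros [Hub Hlub]; split.
  - intros _ [d [Dd ->]]; apply xi_mono, Hub, Dd.
  - intros B HB z Bz; apply Hlub.
    intros d Dd; exact (HB (xi P d) (ex_intro _ d (conj Dd eq_refl)) z Bz).
Qed.

Theorem mainTheorem7 (P : poset) (HP : dcpo P) :
  scott_continuous_map (@le P) (leK P) (xi P).
Proof.
  apply scott_continuous_of_monotone_sup.
  - exact (xi_mono P).
  - intros D s _; exact (xi_sup P D s).
Qed.
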